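(* Fix a finite alphabet $\mathcal{X}\subset\mathbb{C}$ and consider the following communication model (a coherent-processing receiver with feedback-adapted displacement and on/off photon detection). A message $M_s$, uniformly distributed on $\{1,\dots,e^{NR}\}$, is encoded into a codeword $(X_1,\dots,X_N)\in\mathcal{X}^N$ satisfying the mean-photon-number constraint $\mathbb{E}[|X_i|^2]=\mathcal{E}$ for every $i$. In the $i$-th symbol period the receiver applies a complex control (displacement) signal $l_i=l_i(Y_1^{i-1})\in\mathbb{C}$, held constant over the symbol period and allowed to be an arbitrary function of the previous outputs $Y_1^{i-1}=(Y_1,\dots,Y_{i-1})$, and then observes the binary output $Y_i\in\{0,1\}$ (whether or not any photon arrives in the symbol period) with $$\Pr(Y_i=0\mid X_i,Y_1^{i-1})=e^{-|X_i+l_i(Y_1^{i-1})|^2},\qquad \Pr(Y_i=1\mid X_i,Y_1^{i-1})=1-e^{-|X_i+l_i(Y_1^{i-1})|^2},$$ conditionally independent of $(X_j)_{j\neq i}$. The decoder outputs an estimate $\hat M_s(Y_1^N)$. Let $C_{\sf coherent}(\mathcal{E})$ (in nats per channel use) be the supremum of rates $R$ for which there exist encoders, control policies and decoders with $\Pr(M_s\neq \hat M_s(Y_1^N))\to 0$ as $N\to\infty$. Then, as $\mathcal{E}\to 0$, $$\frac{C_{\sf coherent}(\mathcal{E})}{\mathcal{E}}\le \log\frac{1}{\mathcal{E}}-\log\log\frac{1}{\mathcal{E}}+O(1).$$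
   Context: $\log$ denotes the natural logarithm. $O(1)$ denotes a function of $\mathcal{E}$ that stays bounded as $\mathcal{E}\to 0$. Physically, $X_i$ is the complex amplitude of the coherent state $|X_i\rangle$ sent in the $i$-th channel use over a lossless optical channel (loss subsumed into $\mathcal{E}$), the receiver mixes it with a local coherent signal of amplitude $l_i$ so that the detected field has amplitude $X_i+l_i$, and an ideal photon counter produces Poisson-distributed counts with mean $|X_i+l_i|^2$; $Y_i$ records whether the count is zero or not. *)

From Stdlib Require Import Reals List.
From Coquelicot Require Import Coquelicot.
Import ListNotations.
Open Scope R_scope.

Definition cplx := (R * R)%type.
Definition cadd (z w : cplx) : cplx := (fst z + fst w, snd z + snd w).
Definition cabs2 (z : cplx) : R := fst z * fst z + snd z * snd z.

Definition lsum {A : Type} (f : A -> R) (l : list A) : R :=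
  fold_right Rplus 0 (map f l).

Fixpoint bseqs (n : nat) : list (list bool) :=
  match n with
  | O => [nil]
  | S k => flat_map (fun s => [s ++ [false]; s ++ [true]]) (bseqs k)
  end.

(* Channel law: Pr(Y=0 | x, l) = exp(-|x+l|^2), Pr(Y=1 | x, l) = 1 - exp(-|x+l|^2).
   (y = false means "no photon", y = true means "at least one photon"). *)
Definition chan (y : bool) (x l : cplx) : R :=
  if y then 1 - exp (- cabs2 (cadd x l)) else exp (- cabs2 (cadd x l)).

(* A code of block length N with K messages (messages 0..K-1):
   - enc m i : the i-th channel input (i = 0..N-1) for message m,
   - ctrl i h : the displacement l_i used in period i given the previous
                outputs h = (Y_1,...,Y_{i-1}) (in order),
   - dec ys  : the decoded message from the full output sequence. *)
Record code := mkCode {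
  c_enc  : nat -> nat -> cplx;
  c_ctrl : nat -> list bool -> cplx;
  c_dec  : list bool -> nat
}.

Fixpoint pathprob (x : nat -> cplx) (ctrl : nat -> list bool -> cplx)
    (hist ys : list bool) : R :=
  match ys with
  | nil => 1
  | y :: ys' =>
      chan y (x (length hist)) (ctrl (length hist) hist) *
      pathprob x ctrl (hist ++ [y]) ys'
  end.

Definition err_prob (N K : nat) (c : code) : R :=
  / INR K * lsum (fun m =>
     lsum (fun ys => pathprob (c_enc c m) (c_ctrl c) nil ys *
                     (if Nat.eqb (c_dec c ys) m then 0 else 1))
          (bseqs N))
     (seq 0 K).

Definition valid_code (alph : list cplx) (En : R) (N K : nat) (c : code) : Prop :=
  (forall m i, (m < K)%nat -> (i < N)%nat -> In (c_enc c m i) alph) /\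
  (forall i, (i < N)%nat ->
     / INR K * lsum (fun m => cabs2 (c_enc c m i)) (seq 0 K) = En).

(* Number of messages for rate Rt at blocklength N: K = ceil(exp(N Rt)). *)
Definition msg_count (Rt : R) (N K : nat) : Prop :=
  exp (INR N * Rt) <= INR K < exp (INR N * Rt) + 1.

Definition achievable (alph : list cplx) (En Rt : R) : Prop :=
  forall eps, 0 < eps -> exists N0 : nat, forall N : nat, (N0 <= N)%nat ->
    exists (K : nat) (c : code),
      msg_count Rt N K /\ valid_code alph En N K c /\ err_prob N K c <= eps.

Definition C_coherent (alph : list cplx) (En : R) : Rbar :=
  Lub_Rbar (achievable alph En).

(* Compare the output law of every codeword with that of a reference channel that
   ignores the input and produces dark counts with probability [En].  Along the
   feedback tree the relative entropy splits into per-letter divergences, each at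
   most [2 En + (c + kappa ln (1/En)) |x|^2] with [kappa < 1] depending only on the
   smallest nonzero symbol energy [a]: a displacement with [|l|^2 >= tau] makes the
   reference click probability bounded below, while a smaller one keeps the click
   probability below [kappa |x|^2].  A change of measure on the decoding region of
   each message turns this into [ln K (1 - P_err) <= N (2 En + (c + kappa ln (1/En)) En) + 1],
   so every achievable rate is at most [En (kappa ln (1/En) + O(1))]; finally
   [(1 - kappa) L >= ln L + O(1)] absorbs the [ln ln] term. *)

From Stdlib Require Import Reals List Lra Lia.
From Coquelicot Require Import Coquelicot.
Import ListNotations.
Open Scope R_scope.

Definition indic (b : bool) : R := if b then 1 else 0.

Lemma lsum_cons {A} (f : A -> R) a l : lsum f (a :: l) = f a + lsum f l.
Proof. reflexivity. Qed.

Lemma lsum_ext {A} (f g : A -> R) l :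
  (forall a, In a l -> f a = g a) -> lsum f l = lsum g l.
Proof.
  induction l as [|a l IH]; intros H; [reflexivity|].
  rewrite !lsum_cons, IH by (intros; apply H; right; auto).
  rewrite H by (left; auto). reflexivity.
Qed.

Lemma lsum_le {A} (f g : A -> R) l :
  (forall a, In a l -> f a <= g a) -> lsum f l <= lsum g l.
Proof.
  induction l as [|a l IH]; intros H; [apply Rle_refl|]. rewrite !lsum_cons.
  apply Rplus_le_compat; [apply H; left|apply IH; intros; apply H; right]; auto.
Qed.

Lemma lsum_add {A} (f g : A -> R) l :
  lsum (fun a => f a + g a) l = lsum f l + lsum g l.
Proof. induction l; [unfold lsum; simpl; ring|]. rewrite !lsum_cons, IHl. ring. Qed.

Lemma lsum_scal {A} c (f : A -> R) l : lsum (fun a => c * f a) l = c * lsum f l.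
Proof. induction l; [unfold lsum; simpl; ring|]. rewrite !lsum_cons, IHl. ring. Qed.

Lemma lsum_const {A} c (l : list A) : lsum (fun _ => c) l = INR (length l) * c.
Proof.
  induction l; [unfold lsum; simpl; ring|].
  rewrite lsum_cons, IHl, length_cons, S_INR. ring.
Qed.

Lemma lsum_swap {A B} (F : A -> B -> R) l1 l2 :
  lsum (fun a => lsum (F a) l2) l1 = lsum (fun b => lsum (fun a => F a b) l1) l2.
Proof.
  induction l1 as [|a l IH].
  - rewrite (lsum_const 0). unfold lsum at 1. simpl. ring.
  - rewrite lsum_cons, IH, <- lsum_add. reflexivity.
Qed.

Lemma lsum_indic_seq v st K :
  lsum (fun m => indic (Nat.eqb v m)) (seq st K)
  = indic (Nat.leb st v && Nat.ltb v (st + K)).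
Proof.
  revert st; induction K as [|K IH]; intros st; simpl seq.
  - rewrite Nat.add_0_r. unfold lsum, indic; simpl.
    destruct (Nat.leb_spec st v), (Nat.ltb_spec v st); simpl; lra || lia.
  - rewrite lsum_cons, IH. unfold indic.
    destruct (Nat.eqb_spec v st), (Nat.leb_spec st v), (Nat.ltb_spec v (st + S K)),
      (Nat.leb_spec (S st) v), (Nat.ltb_spec v (S st + K)); simpl; lra || lia.
Qed.

Fixpoint bsum (n : nat) (f : list bool -> R) : R :=
  match n with
  | O => f nil
  | S k => bsum k (fun s => f (false :: s)) + bsum k (fun s => f (true :: s))
  end.

Lemma bsum_ext n : forall f g, (forall s, f s = g s) -> bsum n f = bsum n g.
Proof.
  induction n as [|n IH]; intros f g H; simpl; [apply H|].
  f_equal; apply IH; intros; apply H.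
Qed.

Lemma bsum_le n : forall f g, (forall s, f s <= g s) -> bsum n f <= bsum n g.
Proof.
  induction n as [|n IH]; intros f g H; simpl; [apply H|].
  apply Rplus_le_compat; apply IH; intros; apply H.
Qed.

Lemma bsum_add n : forall f g, bsum n (fun s => f s + g s) = bsum n f + bsum n g.
Proof.
  induction n as [|n IH]; intros f g; simpl; [reflexivity|].
  rewrite (IH (fun s => f (false :: s))), (IH (fun s => f (true :: s))). ring.
Qed.

Lemma bsum_scal n : forall c f, bsum n (fun s => c * f s) = c * bsum n f.
Proof.
  induction n as [|n IH]; intros c f; simpl; [reflexivity|].
  rewrite (IH c (fun s => f (false :: s))), (IH c (fun s => f (true :: s))). ring.
Qed.

Lemma bsum_0 n : bsum n (fun _ => 0) = 0.
Proof. induction n as [|n IH]; simpl; [|rewrite IH]; ring. Qed.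

Lemma bsum_snoc n : forall f,
  bsum n (fun s => f (s ++ [false]) + f (s ++ [true])) = bsum (S n) f.
Proof.
  induction n as [|n IH]; intros f; [reflexivity|].
  simpl. rewrite (IH (fun s => f (false :: s))), (IH (fun s => f (true :: s))).
  reflexivity.
Qed.

Lemma lsum_flat_map_pair (f : list bool -> R) (g h : list bool -> list bool) L :
  lsum f (flat_map (fun s => [g s; h s]) L) = lsum (fun s => f (g s) + f (h s)) L.
Proof.
  induction L as [|s L IH]; [reflexivity|].
  simpl flat_map. rewrite !lsum_cons, <- IH. unfold lsum; simpl. ring.
Qed.

Lemma lsum_bseqs n f : lsum f (bseqs n) = bsum n f.
Proof.
  revert f; induction n as [|n IH]; intros f; [unfold lsum; simpl; ring|].
  simpl bseqs. rewrite lsum_flat_map_pair, IH. apply bsum_snoc.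
Qed.

Lemma lsum_bsum {A} n (F : A -> list bool -> R) l :
  lsum (fun a => bsum n (F a)) l = bsum n (fun s => lsum (fun a => F a s) l).
Proof.
  induction l as [|a l IH].
  - symmetry; apply bsum_0.
  - rewrite lsum_cons, IH, <- bsum_add. reflexivity.
Qed.

Lemma ln_le_sub_1 y : 0 < y -> ln y <= y - 1.
Proof. intros Hy. pose proof (exp_ineq1_le (ln y)) as He. rewrite exp_ln in He by lra. lra. Qed.

Lemma ln_nonpos y : 0 < y <= 1 -> ln y <= 0.
Proof. intros Hy. rewrite <- ln_1. apply ln_le; lra. Qed.

Lemma exp_le_exp x y : x <= y -> exp x <= exp y.
Proof. intros [H| ->]; [left; apply exp_increasing; lra|apply Rle_refl]. Qed.

Lemma exp_neg_le_1 v : 0 <= v -> exp (- v) <= 1.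
Proof. intros Hv. rewrite <- exp_0. apply exp_le_exp. lra. Qed.

Lemma exp_neg_le_inv v : 0 <= v -> exp (- v) <= / (1 + v).
Proof.
  intros Hv. rewrite exp_Ropp. apply Rinv_le_contravar; [lra|apply exp_ineq1_le].
Qed.

Lemma one_sub_exp_neg_le v : 1 - exp (- v) <= v.
Proof. pose proof (exp_ineq1_le (- v)). lra. Qed.

Lemma mul_exp_neg_le_1 v : 0 <= v -> v * exp (- v) <= 1.
Proof.
  intros Hv. pose proof (exp_neg_le_inv v Hv). pose proof (exp_pos (- v)).
  apply Rle_trans with (v * / (1 + v)); [apply Rmult_le_compat_l; lra|].
  apply (Rmult_le_reg_r (1 + v)); [lra|]. field_simplify; lra.
Qed.

Lemma neg_ln_one_sub_le d : 0 < d <= 1/2 -> - ln (1 - d) <= 2 * d.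
Proof.
  intros Hd. rewrite <- ln_Rinv by lra.
  apply Rle_trans with (/ (1 - d) - 1); [apply ln_le_sub_1, Rinv_0_lt_compat; lra|].
  apply (Rmult_le_reg_r (1 - d)); [lra|]. field_simplify; nra.
Qed.

Definition kl (p q : R) : R := p * ln (p / q).

Lemma kl_mul p p' q q' : 0 <= p -> 0 <= p' -> 0 < q -> 0 < q' ->
  kl (p * p') (q * q') = p' * kl p q + p * kl p' q'.
Proof.
  intros. unfold kl.
  destruct (Req_dec p 0) as [->|]; [ring|]. destruct (Req_dec p' 0) as [->|]; [ring|].
  replace (p * p' / (q * q')) with ((p / q) * (p' / q')) by (field; lra).
  rewrite ln_mult by (apply Rdiv_lt_0_compat; lra). ring.
Qed.

Lemma kl_nonpos p q : 0 <= p <= q -> kl p q <= 0.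
Proof.
  intros Hp. unfold kl. destruct (Req_dec p 0) as [->|]; [lra|].
  assert (ln (p / q) <= 0).
  { apply ln_nonpos. split; [apply Rdiv_lt_0_compat; lra|].
    apply (Rmult_le_reg_r q); [lra|]. field_simplify; lra. }
  nra.
Qed.

Lemma kl_le_neg_ln p q : 0 <= p <= 1 -> 0 < q -> kl p q <= p * - ln q.
Proof.
  intros Hp Hq. unfold kl. destruct (Req_dec p 0) as [->|]; [lra|].
  rewrite ln_div by lra. pose proof (ln_nonpos p). nra.
Qed.

Lemma mul_ln_le_kl p q w : 0 <= p -> 0 < q -> 0 < w -> p * ln w <= kl p q + q * w - p.
Proof.
  intros Hp Hq Hw. unfold kl. destruct (Req_dec p 0) as [->|]; [nra|].
  pose proof (ln_le_sub_1 (w * q / p) ltac:(apply Rdiv_lt_0_compat; nra)) as Hln.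
  rewrite ln_div, ln_mult in Hln by nra. rewrite ln_div by lra.
  apply (Rmult_le_compat_l p) in Hln; [|lra].
  replace (p * (w * q / p - 1)) with (q * w - p) in Hln by (field; lra). lra.
Qed.

Lemma bsum_kl_mul n c r P Q :
  0 <= c -> 0 < r -> (forall s, 0 <= P s) -> (forall s, 0 < Q s) -> bsum n P = 1 ->
  bsum n (fun s => kl (c * P s) (r * Q s)) = kl c r + c * bsum n (fun s => kl (P s) (Q s)).
Proof.
  intros Hc Hr HP HQ HP1.
  rewrite (bsum_ext n _ (fun s => kl c r * P s + c * kl (P s) (Q s))).
  - rewrite bsum_add, !bsum_scal, HP1. ring.
  - intros s. rewrite kl_mul by auto. ring.
Qed.

Lemma bsum_change_of_measure n P Q (E : list bool -> bool) K :
  (forall s, 0 <= P s) -> (forall s, 0 < Q s) -> bsum n P = 1 -> bsum n Q = 1 -> 1 <= K ->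
  ln K * bsum n (fun s => P s * indic (E s))
  <= bsum n (fun s => kl (P s) (Q s)) + K * bsum n (fun s => Q s * indic (E s)).
Proof.
  intros HP HQ HP1 HQ1 HK.
  rewrite <- bsum_scal.
  apply Rle_trans with
    (bsum n (fun s => kl (P s) (Q s) + K * (Q s * indic (E s)) + (Q s + -1 * P s))).
  - apply bsum_le. intros s. pose proof (HQ s). unfold indic. destruct (E s).
    + pose proof (mul_ln_le_kl (P s) (Q s) K (HP s) (HQ s) ltac:(lra)). nra.
    + pose proof (mul_ln_le_kl (P s) (Q s) 1 (HP s) (HQ s) ltac:(lra)) as Hgibbs.
      rewrite ln_1 in Hgibbs. nra.
  - rewrite !bsum_add, bsum_scal, (bsum_scal n (-1)), HP1, HQ1. lra.
Qed.

(* The channel at input 0 with dark counts of probability [dl]; the dark counts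
   make it positive on both outputs. *)
Definition ref_chan (dl : R) (y : bool) (l : cplx) : R :=
  if y then 1 - (1 - dl) * exp (- cabs2 l) else (1 - dl) * exp (- cabs2 l).

Fixpoint ref_pathprob (dl : R) (ctrl : nat -> list bool -> cplx) (hist ys : list bool) : R :=
  match ys with
  | nil => 1
  | y :: ys' => ref_chan dl y (ctrl (length hist) hist) * ref_pathprob dl ctrl (hist ++ [y]) ys'
  end.

Definition letter_div (dl : R) (x l : cplx) : R :=
  kl (chan false x l) (ref_chan dl false l) + kl (chan true x l) (ref_chan dl true l).

Lemma cabs2_ge0 z : 0 <= cabs2 z.
Proof. unfold cabs2. nra. Qed.

Lemma chan_nonneg y x l : 0 <= chan y x l.
Proof.
  pose proof (exp_pos (- cabs2 (cadd x l))).
  pose proof (exp_neg_le_1 _ (cabs2_ge0 (cadd x l))). unfold chan. destruct y; lra.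
Qed.

Lemma ref_chan_pos dl y l : 0 < dl < 1 -> 0 < ref_chan dl y l.
Proof.
  intros. pose proof (exp_pos (- cabs2 l)). pose proof (exp_neg_le_1 _ (cabs2_ge0 l)).
  unfold ref_chan. destruct y; nra.
Qed.

Lemma pathprob_nonneg x ctrl ys h : 0 <= pathprob x ctrl h ys.
Proof.
  revert h; induction ys; intros h; simpl; [lra|].
  apply Rmult_le_pos; [apply chan_nonneg|apply IHys].
Qed.

Lemma ref_pathprob_pos dl ctrl ys h : 0 < dl < 1 -> 0 < ref_pathprob dl ctrl h ys.
Proof.
  intros Hd; revert h; induction ys; intros h; simpl; [lra|].
  apply Rmult_lt_0_compat; [apply ref_chan_pos; auto|apply IHys].
Qed.

Lemma bsum_pathprob x ctrl n h : bsum n (pathprob x ctrl h) = 1.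
Proof.
  revert h; induction n; intros h; simpl; [reflexivity|].
  rewrite !bsum_scal, !IHn. unfold chan. ring.
Qed.

Lemma bsum_ref_pathprob dl ctrl n h : bsum n (ref_pathprob dl ctrl h) = 1.
Proof.
  revert h; induction n; intros h; simpl; [reflexivity|].
  rewrite !bsum_scal, !IHn. unfold ref_chan. ring.
Qed.

Lemma bsum_kl_pathprob_le dl x ctrl (f : nat -> R) n h : 0 < dl < 1 ->
  (forall i, (length h <= i < length h + n)%nat -> forall l, letter_div dl (x i) l <= f i) ->
  bsum n (fun s => kl (pathprob x ctrl h s) (ref_pathprob dl ctrl h s))
  <= lsum f (seq (length h) n).
Proof.
  intros Hd. revert h; induction n as [|n IH]; intros h Hf.
  - simpl. unfold kl, lsum. rewrite Rdiv_1_l, Rinv_1, ln_1. simpl. lra.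
  - cbn [bsum pathprob ref_pathprob seq]. rewrite lsum_cons.
    set (l := ctrl (length h) h).
    assert (Hrest : forall y, bsum n (fun s => kl (pathprob x ctrl (h ++ [y]) s)
                                              (ref_pathprob dl ctrl (h ++ [y]) s))
                              <= lsum f (seq (S (length h)) n)).
    { intros y. replace (S (length h)) with (length (h ++ [y]))
        by (rewrite length_app; simpl; lia).
      apply IH. rewrite length_app; simpl. intros i Hi; apply Hf; lia. }
    rewrite !bsum_kl_mul; auto using chan_nonneg, ref_chan_pos, pathprob_nonneg,
      ref_pathprob_pos, bsum_pathprob.
    pose proof (Hf (length h) ltac:(lia) l) as Hletter. unfold letter_div in Hletter.
    pose proof (Rmult_le_compat_l _ _ _ (chan_nonneg false (x (length h)) l) (Hrest false)).
    pose proof (Rmult_le_compat_l _ _ _ (chan_nonneg true (x (length h)) l) (Hrest true)).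
    assert (chan false (x (length h)) l + chan true (x (length h)) l = 1)
      by (unfold chan; ring).
    nra.
Qed.

Definition p_correct (N : nat) (c : code) (m : nat) : R :=
  bsum N (fun s => pathprob (c_enc c m) (c_ctrl c) nil s * indic (Nat.eqb (c_dec c s) m)).

Lemma one_sub_err_prob N K c : (1 <= K)%nat ->
  1 - err_prob N K c = / INR K * lsum (p_correct N c) (seq 0 K).
Proof.
  intros HK. assert (1 <= INR K) by (apply (le_INR 1); lia).
  unfold err_prob. rewrite (lsum_ext _ (fun m => 1 + -1 * p_correct N c m)).
  - rewrite lsum_add, lsum_const, lsum_scal, length_seq. field. lra.
  - intros m _. unfold p_correct. rewrite lsum_bseqs, <- bsum_scal.
    rewrite <- (bsum_pathprob (c_enc c m) (c_ctrl c) N nil) at 1. rewrite <- bsum_add.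
    apply bsum_ext. intros s. unfold indic. destruct (Nat.eqb _ _); ring.
Qed.

Lemma lsum_decoded_le_1 n Q (g : list bool -> nat) K :
  (forall s, 0 <= Q s) -> bsum n Q = 1 ->
  lsum (fun m => bsum n (fun s => Q s * indic (Nat.eqb (g s) m))) (seq 0 K) <= 1.
Proof.
  intros HQ HQ1. rewrite lsum_bsum, <- HQ1. apply bsum_le. intros s.
  rewrite lsum_scal, lsum_indic_seq. pose proof (HQ s). unfold indic.
  destruct (andb _ _); lra.
Qed.

Lemma lsum_codeword_cost alph En N K c A B : (1 <= K)%nat -> valid_code alph En N K c ->
  lsum (fun m => lsum (fun i => A + B * cabs2 (c_enc c m i)) (seq 0 N)) (seq 0 K)
  = INR N * (INR K * (A + B * En)).
Proof.
  intros HK [_ Hen]. assert (1 <= INR K) by (apply (le_INR 1); lia).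
  rewrite lsum_swap, (lsum_ext _ (fun _ => INR K * (A + B * En))).
  - rewrite lsum_const, length_seq. reflexivity.
  - intros i Hi. apply in_seq in Hi.
    rewrite lsum_add, lsum_const, lsum_scal, length_seq.
    rewrite <- (Hen i ltac:(lia)). field. lra.
Qed.

Lemma ln_mul_p_correct_le dl (f : nat -> R) N K c m : 0 < dl < 1 -> (1 <= K)%nat ->
  (forall i, (i < N)%nat -> forall l, letter_div dl (c_enc c m i) l <= f i) ->
  ln (INR K) * p_correct N c m
  <= lsum f (seq 0 N)
     + INR K * bsum N (fun s => ref_pathprob dl (c_ctrl c) nil s * indic (Nat.eqb (c_dec c s) m)).
Proof.
  intros Hd HK Hf.
  eapply Rle_trans; [apply (bsum_change_of_measure N (pathprob (c_enc c m) (c_ctrl c) nil)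
                                                   (ref_pathprob dl (c_ctrl c) nil))|].
  - intros; apply pathprob_nonneg.
  - intros; apply ref_pathprob_pos, Hd.
  - apply bsum_pathprob.
  - apply bsum_ref_pathprob.
  - apply (le_INR 1); lia.
  - apply Rplus_le_compat_r. apply (bsum_kl_pathprob_le dl _ _ _ N nil Hd).
    intros i Hi; apply Hf; simpl in Hi; lia.
Qed.

Lemma converse_bound alph dl A B En N K c : 0 < dl < 1 -> (1 <= K)%nat ->
  (forall x, In x alph -> forall l, letter_div dl x l <= A + B * cabs2 x) ->
  valid_code alph En N K c ->
  ln (INR K) * (1 - err_prob N K c) <= INR N * (A + B * En) + 1.
Proof.
  intros Hd HK Hletter Hv. assert (1 <= INR K) by (apply (le_INR 1); lia).
  assert (Hsum : lsum (fun m => ln (INR K) * p_correct N c m) (seq 0 K)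
                 <= INR N * (INR K * (A + B * En)) + INR K).
  { eapply Rle_trans; [apply lsum_le; intros m Hm; apply (ln_mul_p_correct_le dl)|].
    - exact Hd.
    - exact HK.
    - intros i Hi l. apply in_seq in Hm. apply Hletter, Hv; lia.
    - rewrite lsum_add, lsum_scal, (lsum_codeword_cost alph En N K c A B HK Hv).
      assert (Hpos : forall s, 0 <= ref_pathprob dl (c_ctrl c) nil s)
        by (intros; left; apply ref_pathprob_pos, Hd).
      pose proof (lsum_decoded_le_1 N _ (c_dec c) K Hpos (bsum_ref_pathprob dl (c_ctrl c) N nil)).
      nra. }
  rewrite one_sub_err_prob, lsum_scal in * by exact HK.
  apply (Rmult_le_reg_l (INR K)); [lra|].
  replace (INR K * (ln (INR K) * (/ INR K * lsum (p_correct N c) (seq 0 K))))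
    with (ln (INR K) * lsum (p_correct N c) (seq 0 K)) by (field; lra).
  lra.
Qed.

Lemma achievable_le alph En U Rt : 0 <= U ->
  (forall N K c, (1 <= K)%nat -> valid_code alph En N K c ->
     ln (INR K) * (1 - err_prob N K c) <= INR N * U + 1) ->
  achievable alph En Rt -> Rt <= U.
Proof.
  intros HU Hconv Hach.
  destruct (Rle_lt_dec Rt U) as [|HRt]; [assumption|exfalso].
  set (gap := Rt - U).
  set (eps := Rmin (1/2) (gap / (2 * Rt))).
  assert (Heps : 0 < eps) by (apply Rmin_pos; [|apply Rdiv_lt_0_compat]; unfold gap; lra).
  assert (Heps_half : eps <= 1/2) by apply Rmin_l.
  assert (Heps_gap : eps * Rt <= gap / 2).
  { apply Rle_trans with (gap / (2 * Rt) * Rt).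
    - apply Rmult_le_compat_r; [lra|apply Rmin_r].
    - right; field; lra. }
  destruct (Hach eps Heps) as [N0 HN0].
  destruct (archimed_cor1 (gap / 2)) as [N1 [HN1 HN1pos]]; [unfold gap; lra|].
  destruct (HN0 (N0 + N1)%nat ltac:(lia)) as [K [c [[HlnK HK] [Hv Herr]]]].
  set (N := (N0 + N1)%nat) in *.
  assert (HK1 : (1 <= K)%nat).
  { destruct K; [|lia]. simpl in HlnK. pose proof (exp_pos (INR N * Rt)). lra. }
  assert (HNRt : INR N * Rt <= ln (INR K)).
  { rewrite <- (ln_exp (INR N * Rt)). apply ln_le; [apply exp_pos|lra]. }
  assert (HN : INR N1 <= INR N) by (apply le_INR; unfold N; lia).
  assert (HN1' : 0 < INR N1) by (apply lt_0_INR; lia).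
  assert (Hbig : 1 < INR N * (gap / 2)).
  { apply Rmult_lt_compat_l with (r := INR N1) in HN1; [|lra].
    rewrite Rinv_r in HN1 by lra. unfold gap in *. nra. }
  pose proof (Hconv N K c HK1 Hv) as Hb.
  assert (INR N * Rt * (1 - eps) <= ln (INR K) * (1 - err_prob N K c))
    by (apply Rmult_le_compat; [apply Rmult_le_pos; [apply pos_INR|]|..]; lra).
  assert (0 <= INR N) by apply pos_INR.
  unfold gap in *. nra.
Qed.

Lemma cabs2_cadd_zero x l : cabs2 x = 0 -> cabs2 (cadd x l) = cabs2 l.
Proof.
  destruct x as [x1 x2], l as [l1 l2]; unfold cabs2, cadd; simpl. intros H.
  assert (x1 = 0 /\ x2 = 0) as [-> ->] by nra. ring.
Qed.

Lemma cabs2_le_cadd x l : cabs2 l <= 2 * cabs2 (cadd x l) + 2 * cabs2 x.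
Proof.
  destruct x as [x1 x2], l as [l1 l2]; unfold cabs2, cadd; simpl.
  pose proof (Rle_0_sqr (x1 + l1 + x1)). pose proof (Rle_0_sqr (x2 + l2 + x2)).
  unfold Rsqr in *. nra.
Qed.

Lemma cabs2_cadd_young th x l : 0 < th ->
  cabs2 (cadd x l) <= (1 + th) * cabs2 x + (1 + / th) * cabs2 l.
Proof.
  intros Hth. destruct x as [x1 x2], l as [l1 l2]; unfold cabs2, cadd; simpl.
  apply (Rmult_le_reg_l th); [lra|].
  replace (th * ((1 + th) * (x1 * x1 + x2 * x2) + (1 + / th) * (l1 * l1 + l2 * l2)))
    with (th * (1 + th) * (x1 * x1 + x2 * x2) + (th + 1) * (l1 * l1 + l2 * l2))
    by (field; lra).
  pose proof (Rle_0_sqr (th * x1 - l1)). pose proof (Rle_0_sqr (th * x2 - l2)).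
  unfold Rsqr in *. nra.
Qed.

Lemma exp_neg_sub_le u s d : 0 <= u -> 0 <= d -> s <= u + d -> exp (- u) - exp (- s) <= d.
Proof.
  intros Hu Hd Hs.
  assert (Hmono : exp (- (u + d)) <= exp (- s)) by (apply exp_le_exp; lra).
  rewrite Ropp_plus_distr, exp_plus in Hmono.
  pose proof (exp_ineq1_le (- d)). pose proof (exp_pos (- u)). pose proof (exp_neg_le_1 u Hu).
  nra.
Qed.

Lemma one_sub_exp_neg_le_shrink a u : 0 < a -> a <= u ->
  1 - exp (- u) <= (1 - a / (4 + 2 * a)) * u.
Proof.
  intros Ha Hu. set (w := exp (- (u / 2))).
  assert (Hww : exp (- u) = w * w) by (unfold w; rewrite <- exp_plus; f_equal; field).
  assert (Hw0 : 0 < w) by apply exp_pos.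
  assert (Hw1 : 1 - w <= u / 2) by apply one_sub_exp_neg_le.
  assert (Hw2 : w <= 2 / (2 + a)).
  { apply Rle_trans with (/ (1 + u / 2)); [apply exp_neg_le_inv; lra|].
    replace (2 / (2 + a)) with (/ (1 + a / 2)) by (field; lra).
    apply Rinv_le_contravar; lra. }
  rewrite Hww.
  replace (1 - w * w) with ((1 - w) * (1 + w)) by ring.
  replace ((1 - a / (4 + 2 * a)) * u) with ((u / 2) * (1 + 2 / (2 + a))) by (field; lra).
  assert (2 / (2 + a) <= 1) by (apply (Rmult_le_reg_r (2 + a)); [lra|]; field_simplify; lra).
  apply Rmult_le_compat; lra.
Qed.

Lemma neg_ln_ref_on_le dl t : 0 < dl < 1 -> 0 <= t ->
  - ln (1 - (1 - dl) * exp (- t)) <= ln (/ dl).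
Proof.
  intros Hd Ht. pose proof (exp_pos (- t)). pose proof (exp_neg_le_1 t Ht).
  rewrite <- ln_Rinv by nra. apply ln_le; [apply Rinv_0_lt_compat; nra|].
  apply Rinv_le_contravar; nra.
Qed.

Lemma neg_ln_ref_on_le_far dl tau t : 0 < dl < 1 -> 0 < tau <= t ->
  - ln (1 - (1 - dl) * exp (- t)) <= ln (1 + / tau).
Proof.
  intros Hd Ht. pose proof (exp_pos (- t)). pose proof (exp_neg_le_inv t ltac:(lra)).
  assert (Hq : tau / (1 + tau) <= 1 - (1 - dl) * exp (- t)).
  { apply Rle_trans with (1 - / (1 + t)); [|nra].
    apply Rle_trans with (t / (1 + t)); [|right; field; lra].
    apply (Rmult_le_reg_r ((1 + tau) * (1 + t))); [nra|]. field_simplify; nra. }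
  rewrite <- ln_Rinv by (apply Rlt_le_trans with (tau / (1 + tau));
                         [apply Rdiv_lt_0_compat|]; lra).
  apply ln_le; [apply Rinv_0_lt_compat, Rlt_le_trans with (tau / (1 + tau));
                [apply Rdiv_lt_0_compat|]; lra|].
  replace (1 + / tau) with (/ (tau / (1 + tau))) by (field; lra).
  apply Rinv_le_contravar; [apply Rdiv_lt_0_compat|]; lra.
Qed.

Lemma kl_chan_off_le dl x l : 0 < dl <= 1/2 ->
  kl (chan false x l) (ref_chan dl false l)
  <= exp (- cabs2 (cadd x l)) * (cabs2 l - cabs2 (cadd x l)) + 2 * dl.
Proof.
  intros Hd. unfold kl, chan, ref_chan.
  pose proof (exp_pos (- cabs2 (cadd x l))) as HE0.
  pose proof (exp_neg_le_1 _ (cabs2_ge0 (cadd x l))) as HE1.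
  rewrite ln_div, ln_mult, !ln_exp by (try apply Rmult_lt_0_compat; try apply exp_pos; lra).
  pose proof (neg_ln_one_sub_le dl Hd). pose proof (ln_nonpos (1 - dl) ltac:(lra)).
  nra.
Qed.

Lemma kl_chan_on_le dl x l : 0 < dl < 1 ->
  kl (chan true x l) (ref_chan dl true l)
  <= (1 - exp (- cabs2 (cadd x l))) * - ln (1 - (1 - dl) * exp (- cabs2 l)).
Proof.
  intros Hd. apply kl_le_neg_ln.
  - pose proof (chan_nonneg true x l). pose proof (exp_pos (- cabs2 (cadd x l))).
    unfold chan in *. lra.
  - apply (ref_chan_pos dl true l Hd).
Qed.

Lemma letter_div_zero dl x l : 0 < dl <= 1/2 -> cabs2 x = 0 -> letter_div dl x l <= 2 * dl.
Proof.
  intros Hd Hx. unfold letter_div.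
  pose proof (kl_chan_off_le dl x l Hd) as Hoff.
  rewrite cabs2_cadd_zero, Rminus_diag, Rmult_0_r, Rplus_0_l in Hoff by exact Hx.
  assert (Hon : kl (chan true x l) (ref_chan dl true l) <= 0).
  { apply kl_nonpos. unfold chan, ref_chan. rewrite cabs2_cadd_zero by exact Hx.
    pose proof (exp_pos (- cabs2 l)). pose proof (exp_neg_le_1 _ (cabs2_ge0 l)). nra. }
  lra.
Qed.

Section LetterBound.

Variable a : R.
Hypothesis a_pos : 0 < a.

Definition alpha : R := a / (4 + 2 * a).
Definition theta : R := alpha / 4.
Definition kappa : R := 1 - alpha / 2.
(* Chosen so that [(1 + / theta) * tau = theta * a]. *)
Definition tau : R := theta * theta * a / (1 + theta).
Definition c_far : R := ln (1 + / tau).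
Definition c_letter : R := (1 + c_far) / a + 2.

Lemma alpha_bounds : 0 < alpha < 1.
Proof.
  unfold alpha. split; [apply Rdiv_lt_0_compat; lra|].
  apply (Rmult_lt_reg_r (4 + 2 * a)); [lra|]. field_simplify; lra.
Qed.

Lemma theta_pos : 0 < theta.
Proof. pose proof alpha_bounds. unfold theta. lra. Qed.

Lemma kappa_pos : 0 < kappa.
Proof. pose proof alpha_bounds. unfold kappa. lra. Qed.

Lemma tau_pos : 0 < tau.
Proof.
  pose proof theta_pos. unfold tau.
  apply Rdiv_lt_0_compat; [apply Rmult_lt_0_compat; [apply Rmult_lt_0_compat|]|]; lra.
Qed.

Lemma c_far_ge0 : 0 <= c_far.
Proof.
  pose proof tau_pos. unfold c_far. rewrite <- ln_1.
  apply ln_le; [lra|]. pose proof (Rinv_0_lt_compat tau ltac:(lra)). lra.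
Qed.

Lemma c_letter_pos : 0 < c_letter.
Proof.
  pose proof c_far_ge0. unfold c_letter.
  assert (0 < (1 + c_far) / a) by (apply Rdiv_lt_0_compat; lra). lra.
Qed.

(* A displacement with [|l|^2 < tau] barely moves the intensity [|x + l|^2], so the
   probability of a click stays a fixed fraction below [|x|^2]. *)
Lemma one_sub_exp_near x l : a <= cabs2 x -> cabs2 l < tau ->
  1 - exp (- cabs2 (cadd x l)) <= kappa * cabs2 x.
Proof.
  intros Hx Hl. pose proof theta_pos as Hth. set (u := cabs2 x) in *.
  assert (Hs : cabs2 (cadd x l) <= u + 2 * theta * u).
  { pose proof (cabs2_cadd_young theta x l Hth) as Hy. fold u in Hy.
    assert (Htau : (1 + / theta) * tau = theta * a) by (unfold tau; field; lra).
    assert ((1 + / theta) * cabs2 l <= (1 + / theta) * tau).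
    { apply Rmult_le_compat_l; [pose proof (Rinv_0_lt_compat theta Hth)|]; lra. }
    assert (theta * a <= theta * u) by (apply Rmult_le_compat_l; lra).
    lra. }
  pose proof (exp_neg_sub_le u _ (2 * theta * u) ltac:(lra) ltac:(nra) Hs).
  pose proof (one_sub_exp_neg_le_shrink a u a_pos Hx) as Hshrink.
  fold alpha in Hshrink. unfold kappa, theta in *. nra.
Qed.

Lemma on_term_le dl x l : 0 < dl < 1 -> a <= cabs2 x ->
  (1 - exp (- cabs2 (cadd x l))) * - ln (1 - (1 - dl) * exp (- cabs2 l))
  <= c_far + kappa * cabs2 x * ln (/ dl).
Proof.
  intros Hd Hx.
  pose proof (exp_pos (- cabs2 (cadd x l))). pose proof (exp_pos (- cabs2 l)).
  pose proof (exp_neg_le_1 _ (cabs2_ge0 (cadd x l))). pose proof (exp_neg_le_1 _ (cabs2_ge0 l)).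
  assert (Hln : 0 <= - ln (1 - (1 - dl) * exp (- cabs2 l))).
  { pose proof (ln_nonpos (1 - (1 - dl) * exp (- cabs2 l)) ltac:(nra)). lra. }
  assert (HL : 0 <= ln (/ dl)).
  { rewrite ln_Rinv by lra. pose proof (ln_nonpos dl ltac:(lra)). lra. }
  pose proof kappa_pos. pose proof (cabs2_ge0 x).
  destruct (Rle_lt_dec tau (cabs2 l)) as [Hfar|Hnear].
  - pose proof (neg_ln_ref_on_le_far dl tau (cabs2 l) Hd (conj tau_pos Hfar)) as Hc.
    fold c_far in Hc. assert (0 <= kappa * cabs2 x * ln (/ dl)) by (apply Rmult_le_pos; nra).
    nra.
  - pose proof (one_sub_exp_near x l Hx Hnear).
    pose proof (neg_ln_ref_on_le dl (cabs2 l) Hd (cabs2_ge0 l)).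
    pose proof c_far_ge0. nra.
Qed.

Lemma letter_div_large dl x l : 0 < dl <= 1/2 -> a <= cabs2 x ->
  letter_div dl x l <= 2 * dl + (c_letter + kappa * ln (/ dl)) * cabs2 x.
Proof.
  intros Hd Hx. unfold letter_div.
  pose proof (kl_chan_off_le dl x l Hd) as Hoff.
  pose proof (kl_chan_on_le dl x l ltac:(lra)) as Hon.
  pose proof (on_term_le dl x l ltac:(lra) Hx) as Hon'.
  assert (Hgain : exp (- cabs2 (cadd x l)) * (cabs2 l - cabs2 (cadd x l)) <= 1 + 2 * cabs2 x).
  { pose proof (cabs2_le_cadd x l). pose proof (cabs2_ge0 (cadd x l)).
    pose proof (mul_exp_neg_le_1 _ (cabs2_ge0 (cadd x l))).
    pose proof (exp_pos (- cabs2 (cadd x l))).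
    pose proof (exp_neg_le_1 _ (cabs2_ge0 (cadd x l))). nra. }
  assert (Hconst : 1 + c_far <= (c_letter - 2) * cabs2 x).
  { unfold c_letter. replace ((1 + c_far) / a + 2 - 2) with ((1 + c_far) / a) by ring.
    pose proof c_far_ge0.
    apply Rle_trans with ((1 + c_far) / a * a); [right; field; lra|].
    apply Rmult_le_compat_l; [apply Rdiv_le_0_compat|]; lra. }
  nra.
Qed.

Lemma letter_div_le dl x l : 0 < dl <= 1/2 -> cabs2 x = 0 \/ a <= cabs2 x ->
  letter_div dl x l <= 2 * dl + (c_letter + kappa * ln (/ dl)) * cabs2 x.
Proof.
  intros Hd [Hx|Hx].
  - rewrite Hx, Rmult_0_r, Rplus_0_r. apply letter_div_zero; assumption.
  - apply letter_div_large; assumption.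
Qed.

End LetterBound.

Lemma alph_energy_gap (alph : list cplx) :
  exists a, 0 < a /\ forall x, In x alph -> cabs2 x = 0 \/ a <= cabs2 x.
Proof.
  induction alph as [|z l [a [Ha H]]].
  - exists 1. split; [lra|]. intros x [].
  - destruct (Req_dec (cabs2 z) 0) as [Z|Z].
    + exists a. split; [assumption|]. intros x [<-|Hx]; auto.
    + pose proof (cabs2_ge0 z). exists (Rmin a (cabs2 z)). split; [apply Rmin_pos; lra|].
      intros x [<-|Hx]; [right; apply Rmin_r|].
      destruct (H x Hx); [left; assumption|right].
      apply Rle_trans with a; [apply Rmin_l|assumption].
Qed.

Lemma ln_slack b L : 0 < b -> 0 < L -> (1 - b) * L <= L - ln L - ln b.
Proof.
  intros Hb HL. pose proof (ln_le_sub_1 (b * L) ltac:(nra)) as Hln.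
  rewrite ln_mult in Hln by assumption. lra.
Qed.

Theorem theorem1 (alph : list cplx) :
  exists (c E0 : R), 0 < E0 /\
    forall En : R, 0 < En < E0 ->
      Rbar_le (C_coherent alph En)
        (Finite (En * (ln (/ En) - ln (ln (/ En)) + c))).
Proof.
  destruct (alph_energy_gap alph) as [a [Ha Hgap]].
  exists (2 + c_letter a - ln (alpha a / 2)), (1/2). split; [lra|].
  intros En HE. set (L := ln (/ En)).
  assert (HL : 0 < L).
  { unfold L. rewrite ln_Rinv by lra.
    pose proof (ln_increasing En 1 ltac:(lra) ltac:(lra)) as Hln.
    rewrite ln_1 in Hln. lra. }
  set (U := 2 * En + (c_letter a + kappa a * L) * En).
  assert (HU : 0 <= U).
  { pose proof (c_letter_pos a Ha). pose proof (kappa_pos a Ha).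
    assert (0 <= kappa a * L) by nra. unfold U. nra. }
  assert (HUc : U <= En * (L - ln L + (2 + c_letter a - ln (alpha a / 2)))).
  { pose proof (alpha_bounds a Ha).
    pose proof (ln_slack (alpha a / 2) L ltac:(lra) HL).
    unfold U, kappa. nra. }
  apply (Lub_Rbar_correct (achievable alph En)). intros Rt Hach. simpl.
  apply Rle_trans with U; [|exact HUc].
  apply (achievable_le alph En U Rt HU); [|exact Hach].
  intros N K c HK Hv. apply (converse_bound alph En); [lra|exact HK| |exact Hv].
  intros x Hx l. apply letter_div_le; [exact Ha|lra|apply Hgap, Hx].
Qed.
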